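(* Let $\mathbb{F}$ be algebraically closed with $\operatorname{char}\mathbb{F}\ne2$, $G$ abelian, and consider the $G$-graded algebra $\mathcal{R}=\mathfrak{F}(G,\mathcal{D},\widetilde V,\widetilde B,g_0)$ with its antiautomorphism $\varphi$. Then $\varphi$ is an involution (i.e. $\varphi^2=\mathrm{id}$) if and only if there is $\delta\in\{\pm1\}$ such that $\widetilde B$ satisfies $\widetilde B(v,u)=\mu_A\widetilde B(u,v)$ for all $A\in G/T$, $u\in\widetilde V_A$, $v\in\widetilde V_{g_0^{-1}A^{-1}}$, with $\mu_A=\delta\beta(\tau(A))$ if $g_0A^2=T$ and $\mu_A=\delta$ if $g_0A^2\ne T$; in that case $\delta=\operatorname{sgn}(\varphi)$.
   Context: $\mathcal{D}=M_\ell(\mathbb{F})$ with a division $G$-grading (nonzero homogeneous elements invertible) with support $T$, an elementary abelian 2-group, and homogeneous basis $X_t$ ($t\in T$) such that matrix transpose $\varphi_0$ satisfies $\varphi_0(X_t)=\beta(t)X_t$, $\beta(t)\in\{\pm1\}$. $g_0\in G$; $\widetilde V$ is graded by $G/T$; $\widetilde B$ a nondegenerate bilinear form with $\widetilde B(\widetilde V_A,\widetilde V_{A'})=0$ unless $g_0AA'=T$ and $\widetilde B(v,u)=\mu_A\widetilde B(u,v)$ for $u\in\widetilde V_A$, $v\in\widetilde V_{g_0^{-1}A^{-1}}$, some $\mu_A\in\mathbb{F}^\times$. Choose $\gamma(A)\in A$ with $g_0\gamma(A)\gamma(g_0^{-1}A^{-1})=e$ when $g_0A^2\neq T$; $\tau(A)=g_0\gamma(A)^2$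 when $g_0A^2=T$. $V=\bigoplus_A\widetilde V_A\otimes\mathcal{D}$ ($\tilde v\otimes d$ of degree $\gamma(A)\deg d$); $B(u,v)=\widetilde B(u,v)X_{\tau(A)}$ for $u,v\in\widetilde V_A$ with $g_0A^2=T$; $B(u,v)=\widetilde B(u,v)1$ for $u\in\widetilde V_A$, $v\in\widetilde V_{g_0^{-1}A^{-1}}$ with $g_0A^2\neq T$; zero otherwise; extended by $B(ud,vd')=\varphi_0(d)B(u,v)d'$. $\mathcal{R}$ is spanned by operators $v\otimes u:x\mapsto vB(u,x)$ and $\varphi$ is defined by $B(ru,v)=B(u,\varphi(r)v)$. Disregarding the grading, $\mathcal{R}=\mathfrak{F}_U(U)$ for a space $U$ with nondegenerate bilinear form, and an involution $\varphi$ is adjoint with respect to it; $\operatorname{sgn}(\varphi)=1$ if this form is symmetric (orthogonal involution) and $-1$ if skew-symmetric (symplectic). *)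

From HB Require Import structures.
From mathcomp Require Import all_boot all_order all_algebra.
Set Implicit Arguments. Unset Strict Implicit. Unset Printing Implicit Defensive.
Import GRing.Theory.
Local Open Scope ring_scope.

Section GradedDefs.
Variable F : fieldType.

Definition is_subspace (U : lmodType F) (P : {pred U}) :=
  0 \in P /\ forall (a : F) x y, x \in P -> y \in P -> a *: x + y \in P.

Definition bilin_form (U : lmodType F) (b : U -> U -> F) :=
  (forall a x y z, b (a *: x + y) z = a * b x z + b y z) /\
  (forall a x y z, b x (a *: y + z) = a * b x y + b x z).

Definition nondegen_form (U : lmodType F) (b : U -> U -> F) :=
  (forall x, (forall y, b x y = 0) -> x = 0) /\
  (forall y, (forall x, b x y = 0) -> y = 0).

(** F_U(U): the span of the operators  x |-> u b(w,x). *)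
Definition finitary_op (U : lmodType F) (b : U -> U -> F) (f : U -> U) :=
  exists s : seq (U * U), forall x, f x = \sum_(p <- s) b p.2 x *: p.1.

Variable G : zmodType.  (* abelian group, written additively *)

(** D = M_l(F) with a division G-grading with support T (given as the list Ts),
    T an elementary abelian 2-group, homogeneous basis X_t (t in T) with
    X_t^T = beta(t) X_t, beta(t) = +-1. *)
Definition division_grading (l : nat) (Ts : seq G) (X : G -> 'M[F]_l)
    (beta : G -> F) :=
  [/\ uniq Ts, 0 \in Ts,
      {in Ts &, forall s t, s + t \in Ts} &
      {in Ts, forall t, t + t = 0}] /\
  [/\ {in Ts, forall t, X t \in unitmx},
      {in Ts &, forall s t, exists c : F, X s *m X t = c *: X (s + t)},
      (forall c : G -> F, \sum_(t <- Ts) c t *: X t = 0 -> {in Ts, forall t, c t = 0}),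
      (forall d : 'M[F]_l, exists c : G -> F, d = \sum_(t <- Ts) c t *: X t) &
      {in Ts, forall t, (X t)^T = beta t *: X t /\ (beta t = 1 \/ beta t = -1)}].

(** Vt = (+)_{A in G/T} Vt_A; the component of the coset A = g + T is Vg g. *)
Definition quotient_grading (Vt : lmodType F) (Ts : seq G) (Vg : G -> {pred Vt}) :=
  [/\ (forall g, is_subspace (Vg g)),
      (forall g h, g - h \in Ts -> Vg g =i Vg h),
      (forall v, exists s : seq (G * Vt),
          all (fun p => p.2 \in Vg p.1) s /\ v = \sum_(p <- s) p.2) &
      (forall s : seq (G * Vt),
          pairwise (fun p q => p.1 - q.1 \notin Ts) s ->
          all (fun p => p.2 \in Vg p.1) s ->
          \sum_(p <- s) p.2 = 0 -> all (fun p => p.2 == 0) s)].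

Definition form_compatible (Vt : lmodType F) (Ts : seq G) (g0 : G)
    (Vg : G -> {pred Vt}) (Bt : Vt -> Vt -> F) :=
  forall g h u v, u \in Vg g -> v \in Vg h -> g0 + g + h \notin Ts -> Bt u v = 0.

Definition gamma_choice (Ts : seq G) (g0 : G) (gamma : G -> G) :=
  [/\ (forall g, gamma g - g \in Ts),
      (forall g h, g - h \in Ts -> gamma g = gamma h) &
      (forall g, g0 + g + g \notin Ts -> g0 + gamma g + gamma (- g0 - g) = 0)].

Definition tauG (g0 : G) (gamma : G -> G) (g : G) := g0 + gamma g + gamma g.

Definition Bcoef (l : nat) (Ts : seq G) (X : G -> 'M[F]_l) (g0 : G)
    (gamma : G -> G) (g : G) : 'M[F]_l :=
  if g0 + g + g \in Ts then X (tauG g0 gamma g) else 1%:M.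

Definition sym_condition (Vt : lmodType F) (Ts : seq G) (beta : G -> F) (g0 : G)
    (gamma : G -> G) (Vg : G -> {pred Vt}) (Bt : Vt -> Vt -> F) (delta : F) :=
  forall g u v, u \in Vg g -> v \in Vg (- g0 - g) ->
    Bt v u = (if g0 + g + g \in Ts then delta * beta (tauG g0 gamma g) else delta)
             * Bt u v.

(** V = Vt (x) D is identified with 'M[Vt]_l : the element  v (x) d
    corresponds to the matrix (d i j *: v)_{i,j}. *)
Variable Vt : lmodType F.
Variable l : nat.
Notation V := 'M[Vt]_l.

Definition Dract (x : V) (d : 'M[F]_l) : V :=
  \matrix_(i, k) \sum_(j < l) d j k *: x i j.

Definition Fvscale (a : F) (x : V) : V := map_mx ( *:%R a) x.

(** B on V, extended from B0 on Vt by B(ud, vd') = d^T B0(u,v) d'. *)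
Definition BformV (B0 : Vt -> Vt -> 'M[F]_l) (x y : V) : 'M[F]_l :=
  \matrix_(j, k) \sum_(i < l) \sum_(i' < l) B0 (x i j) (y i' k) i i'.

Definition rk1 (B0 : Vt -> Vt -> 'M[F]_l) (v u : V) : V -> V :=
  fun x => Dract v (BformV B0 u x).

Definition inRalg (B0 : Vt -> Vt -> 'M[F]_l) (r : V -> V) :=
  exists s : seq (V * V), forall x, r x = \sum_(p <- s) rk1 B0 p.1 p.2 x.

(** sgn(phi) = delta: disregarding the grading, R is isomorphic (as an
    F-algebra) to F_U(U) for a space U with a nondegen_form bilinear form b,
    phi becomes the adjoint with respect to b, and b(y,x) = delta b(x,y). *)
Definition sgn_is (B0 : Vt -> Vt -> 'M[F]_l) (phi : (V -> V) -> (V -> V))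
    (delta : F) :=
  exists (U : lmodType F) (b : U -> U -> F) (Psi : (V -> V) -> (U -> U)),
    [/\ bilin_form b, nondegen_form b & (forall x y, b y x = delta * b x y)] /\
    [/\ (forall r, inRalg B0 r -> finitary_op b (Psi r)),
        (forall f, finitary_op b f -> exists r, inRalg B0 r /\ forall x, Psi r x = f x) &
        (forall r r', inRalg B0 r -> inRalg B0 r' ->
           (forall x, Psi r x = Psi r' x) -> forall x, r x = r' x)] /\
    [/\ (forall r r', inRalg B0 r -> inRalg B0 r' -> forall x,
           Psi (fun v => r v + r' v) x = Psi r x + Psi r' x),
        (forall a r, inRalg B0 r -> forall x,
           Psi (fun v => Fvscale a (r v)) x = a *: Psi r x),
        (forall r r', inRalg B0 r -> inRalg B0 r' -> forall x,
           Psi (fun v => r (r' v)) x = Psi r (Psi r' x)) &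
        (forall r, inRalg B0 r -> forall x y, b (Psi r x) y = b x (Psi (phi r) y))].

End GradedDefs.

From HB Require Import structures.
From mathcomp Require Import all_boot all_order all_algebra.
From Stdlib Require Import Classical.
Import GRing.Theory.
Local Open Scope ring_scope.
Set Implicit Arguments. Unset Strict Implicit.

(* On the homogeneous component of degree g, the D-valued form B on V satisfies
   B(y, x) = delta_g B(x, y)^T with delta_g = mu_A beta(tau(A)) if g0 A^2 = T and
   delta_g = mu_A otherwise, because transposing X_tau(A) produces beta(tau(A)).
   If delta_g is a constant delta = +-1, then B is delta-hermitian, so the adjoint phi
   satisfies phi^2 = delta^2 = 1; and the (1,1) entry of B on the first column of
   V = Vt (x) M_l is a delta-symmetric form on U = Vt^l that identifies R with F_U(U),
   whence sgn(phi) = delta.  Conversely, phi^2 multiplies the operator v (x) u, for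
   nonzero homogeneous u, v of degrees g, h, by (delta_g delta_h)^-1, so phi^2 = id
   forces delta_g delta_h = 1 for all nonzero degrees, i.e. all delta_g equal one
   sign delta. *)

Section RightDAction.
Variables (F : fieldType) (Vt : lmodType F) (l : nat).
Local Notation V := 'M[Vt]_l.

Lemma Dract_addl (x y : V) d : Dract (x + y) d = Dract x d + Dract y d.
Proof.
by apply/matrixP => i k; rewrite !mxE -big_split; apply: eq_bigr => j _; rewrite mxE scalerDr.
Qed.

Lemma Dract_addr (v : V) M N : Dract v (M + N) = Dract v M + Dract v N.
Proof.
by apply/matrixP => i k; rewrite !mxE -big_split; apply: eq_bigr => j _; rewrite mxE scalerDl.
Qed.

Lemma Dract0l d : Dract (0 : V) d = 0.
Proof. by apply/matrixP => i k; rewrite !mxE big1 // => j _; rewrite mxE scaler0. Qed.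

Lemma Dract0r (v : V) : Dract v 0 = 0.
Proof. by apply/matrixP => i k; rewrite !mxE big1 // => j _; rewrite mxE scale0r. Qed.

Lemma Dract_suml (I : Type) (s : seq I) (f : I -> V) d :
  Dract (\sum_(p <- s) f p) d = \sum_(p <- s) Dract (f p) d.
Proof.
apply: (big_rec2 (fun a b => Dract a d = b)); first exact: Dract0l.
by move=> i y1 y2 _ <-; rewrite Dract_addl.
Qed.

Lemma Dract_mul (v : V) M N : Dract (Dract v M) N = Dract v (M *m N).
Proof.
apply/matrixP => i k; rewrite !mxE.
under eq_bigr => j _ do rewrite mxE scaler_sumr.
rewrite exchange_big /=; apply: eq_bigr => m _.
by rewrite mxE scaler_suml; apply: eq_bigr => j _; rewrite scalerA mulrC.
Qed.

Definition scalar_vmx (a : Vt) : V := \matrix_(i, j) if i == j then a else 0.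

Lemma scalar_vmxE a i j : scalar_vmx a i j = if i == j then a else 0.
Proof. by rewrite mxE. Qed.

Lemma scalar_vmx_eq0 (i : 'I_l) a : scalar_vmx a = 0 -> a = 0.
Proof. by move/matrixP/(_ i i); rewrite scalar_vmxE eqxx mxE. Qed.

Lemma Dract_scalar_vmx b M : Dract (scalar_vmx b) M = \matrix_(i, k) (M i k *: b).
Proof.
apply/matrixP => i k; rewrite !mxE (bigD1 i) //= big1 ?addr0.
  by rewrite scalar_vmxE eqxx.
by move=> j /negbTE hj; rewrite scalar_vmxE eq_sym hj scaler0.
Qed.

Variable i0 : 'I_l.
Local Notation U := {ffun 'I_l -> Vt}.

Definition vcol (x : V) j : U := [ffun i => x i j].
Definition col_vmx (c : U) : V := \matrix_(i, j) if j == i0 then c i else 0.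

Lemma col_vmxE c i j : col_vmx c i j = if j == i0 then c i else 0.
Proof. by rewrite mxE. Qed.

Lemma vcol_col_vmx c : vcol (col_vmx c) i0 = c.
Proof. by apply/ffunP => i; rewrite !ffunE col_vmxE eqxx. Qed.

Lemma vcol_sum (I : Type) (s : seq I) (f : I -> V) j :
  vcol (\sum_(p <- s) f p) j = \sum_(p <- s) vcol (f p) j.
Proof.
by apply/ffunP => i; rewrite !ffunE summxE sum_ffunE; apply: eq_bigr => p _; rewrite ffunE.
Qed.

Lemma vcol_Dract (v : V) M : vcol (Dract v M) i0 = \sum_j M j i0 *: vcol v j.
Proof.
by apply/ffunP => i; rewrite !ffunE mxE sum_ffunE; apply: eq_bigr => j _; rewrite !ffunE.
Qed.

Lemma vcol_Dract_col_vmx c M : vcol (Dract (col_vmx c) M) i0 = M i0 i0 *: c.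
Proof.
apply/ffunP => i; rewrite !ffunE mxE (bigD1 i0) //= big1 ?addr0.
  by rewrite col_vmxE eqxx.
by move=> j /negbTE hj; rewrite col_vmxE hj scaler0.
Qed.

Lemma Dract_delta00 z : Dract z (delta_mx i0 i0) = col_vmx (vcol z i0).
Proof.
apply/matrixP => i k; rewrite col_vmxE mxE !ffunE; case: ifP => hk.
  rewrite (bigD1 i0) //= big1 ?addr0; first by rewrite mxE eqxx (eqP hk) eqxx scale1r.
  by move=> j /negbTE hj; rewrite mxE hj scale0r.
by apply: big1 => j _; rewrite mxE hk andbF scale0r.
Qed.

Lemma vmx_col_decomp (x : V) : x = \sum_j Dract (col_vmx (vcol x j)) (delta_mx i0 j).
Proof.
apply/matrixP => i k; rewrite summxE (bigD1 k) //= big1 ?addr0.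
  rewrite mxE (bigD1 i0) //= big1 ?addr0.
    by rewrite mxE !eqxx scale1r col_vmxE eqxx ffunE.
  by move=> j /negbTE hj; rewrite mxE hj scale0r.
move=> j /negbTE hj; rewrite mxE; apply: big1 => m _.
by rewrite mxE (eq_sym k) hj andbF scale0r.
Qed.

End RightDAction.

Section MatrixForm.
Variables (F : fieldType) (Vt : lmodType F) (l : nat).
Local Notation V := 'M[Vt]_l.

Definition bilinear_mx_form (B0 : Vt -> Vt -> 'M[F]_l) :=
  (forall a u1 u2 v, B0 (a *: u1 + u2) v = a *: B0 u1 v + B0 u2 v) /\
  (forall a u v1 v2, B0 u (a *: v1 + v2) = a *: B0 u v1 + B0 u v2).

Variable B0 : Vt -> Vt -> 'M[F]_l.
Local Notation B := (BformV B0).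

Lemma BformV_trmx (x y : V) (n : F) :
  (forall i j i' k, B0 (x i' k) (y i j) = n *: (B0 (y i j) (x i' k))^T) ->
  B x y = n *: (B y x)^T.
Proof.
move=> H; apply/matrixP => k j; rewrite !mxE mulr_sumr exchange_big /=.
apply: eq_bigr => i _; rewrite mulr_sumr; apply: eq_bigr => i' _.
by rewrite H !mxE.
Qed.

Hypothesis B0_bilin : bilinear_mx_form B0.

Lemma B00l v : B0 0 v = 0.
Proof.
by have := B0_bilin.1 (-1) 0 0 v; rewrite scaler0 addr0 scaleN1r addNr.
Qed.

Lemma B00r u : B0 u 0 = 0.
Proof.
by have := B0_bilin.2 (-1) u 0 0; rewrite scaler0 addr0 scaleN1r addNr.
Qed.

Lemma B0_addr u v w : B0 u (v + w) = B0 u v + B0 u w.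
Proof. by have := B0_bilin.2 1 u v w; rewrite !scale1r. Qed.

Lemma B0_suml (I : Type) (r : seq I) (c : I -> F) (x : I -> Vt) w :
  B0 (\sum_(m <- r) c m *: x m) w = \sum_(m <- r) c m *: B0 (x m) w.
Proof.
apply: (big_rec2 (fun a b => B0 a w = b)); first exact: B00l.
by move=> i y1 y2 _ <-; rewrite B0_bilin.1.
Qed.

Lemma B0_sumr (I : Type) (r : seq I) (c : I -> F) (x : I -> Vt) w :
  B0 w (\sum_(m <- r) c m *: x m) = \sum_(m <- r) c m *: B0 w (x m).
Proof.
apply: (big_rec2 (fun a b => B0 w a = b)); first exact: B00r.
by move=> i y1 y2 _ <-; rewrite B0_bilin.2.
Qed.

Lemma BformV_addr (x y z : V) : B x (y + z) = B x y + B x z.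
Proof.
apply/matrixP => j k; rewrite !mxE -big_split /=; apply: eq_bigr => i _.
rewrite -big_split /=; apply: eq_bigr => i' _.
by rewrite !mxE B0_addr mxE.
Qed.

Lemma BformV0r (x : V) : B x 0 = 0.
Proof.
apply/matrixP => j k; rewrite !mxE big1 // => i _.
by rewrite big1 // => i' _; rewrite mxE B00r mxE.
Qed.

Lemma BformV_oppr (x z : V) : B x (- z) = - B x z.
Proof. by apply/eqP; rewrite -subr_eq0 opprK addrC -BformV_addr subrr BformV0r. Qed.

Lemma BformV_Dract_l (x y : V) d : B (Dract x d) y = d^T *m B x y.
Proof.
apply/matrixP => j k; rewrite !mxE.
under eq_bigr => i _ do under eq_bigr => i' _ do rewrite mxE B0_suml summxE.
under [RHS]eq_bigr => m _ do rewrite !mxE mulr_sumr.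
rewrite [RHS]exchange_big /=; apply: eq_bigr => i _.
under [RHS]eq_bigr => m _ do rewrite mulr_sumr.
rewrite [RHS]exchange_big /=; apply: eq_bigr => i' _.
by apply: eq_bigr => m _; rewrite mxE.
Qed.

Lemma BformV_Dract_r (x y : V) d : B x (Dract y d) = B x y *m d.
Proof.
apply/matrixP => j k; rewrite !mxE.
under eq_bigr => i _ do under eq_bigr => i' _ do rewrite mxE B0_sumr summxE.
under [RHS]eq_bigr => m _ do rewrite !mxE mulr_suml.
rewrite [RHS]exchange_big /=; apply: eq_bigr => i _.
under [RHS]eq_bigr => m _ do rewrite mulr_suml.
rewrite [RHS]exchange_big /=; apply: eq_bigr => i' _.
by apply: eq_bigr => m _; rewrite mxE mulrC.
Qed.

Lemma inRalg_rk1 (v u : V) : inRalg B0 (rk1 B0 v u).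
Proof. by exists [:: (v, u)] => x; rewrite big_seq1. Qed.

Lemma ralg_Dract r y d : inRalg B0 r -> r (Dract y d) = Dract (r y) d.
Proof.
case=> s hs; rewrite !hs Dract_suml; apply: eq_bigr => p _.
by rewrite /rk1 BformV_Dract_r Dract_mul.
Qed.

Lemma ralg_add r x y : inRalg B0 r -> r (x + y) = r x + r y.
Proof.
case=> s hs; rewrite !hs -big_split; apply: eq_bigr => p _.
by rewrite /rk1 BformV_addr Dract_addr.
Qed.

Lemma ralg_sum r (f : 'I_l -> V) : inRalg B0 r -> r (\sum_j f j) = \sum_j r (f j).
Proof.
move=> hr; apply: (big_rec2 (fun a b => r a = b)); last first.
  by move=> i y1 y2 _ <-; rewrite ralg_add.
by case: hr => s ->; rewrite big1 // => p _; rewrite /rk1 BformV0r Dract0r.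
Qed.

Section Nondegenerate.
Hypothesis BformV_nondeg : forall z : V, (forall x, B x z = 0) -> z = 0.

Lemma BformV_inj_r (z1 z2 : V) : (forall x, B x z1 = B x z2) -> z1 = z2.
Proof.
move=> H; apply/eqP; rewrite -subr_eq0; apply/eqP/BformV_nondeg => x.
by rewrite BformV_addr BformV_oppr H subrr.
Qed.

Variable phi : (V -> V) -> (V -> V).
Hypothesis phi_adjoint : forall r, inRalg B0 r ->
  inRalg B0 (phi r) /\ forall x y, B (r x) y = B x (phi r y).

Variable d : F.
Hypothesis BformV_sym : forall x y : V, B y x = d *: (B x y)^T.

Lemma adjoint_involutive : d * d = 1 ->
  forall r, inRalg B0 r -> forall x, phi (phi r) x = r x.
Proof.
move=> dd1 r hr x; apply: BformV_inj_r => z.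
have [hr1 hA1] := phi_adjoint hr; have [_ hA2] := phi_adjoint hr1.
by rewrite -hA2 (BformV_sym x) -hA1 (BformV_sym z) linearZ /= trmxK scalerA dd1 scale1r.
Qed.

Variable i0 : 'I_l.
Local Notation U := {ffun 'I_l -> Vt}.
Local Notation vcol0 x := (vcol x i0).

Definition colform (c c' : U) : F := B (col_vmx i0 c) (col_vmx i0 c') i0 i0.

Lemma colform_expand c c' : colform c c' = \sum_i \sum_i' B0 (c i) (c' i') i i'.
Proof.
by rewrite /colform mxE; apply: eq_bigr => i _; apply: eq_bigr => i' _; rewrite !col_vmxE eqxx.
Qed.

Lemma BformV_col_vmx_r (x : V) c j k :
  B x (col_vmx i0 c) j k = if k == i0 then colform (vcol x j) c else 0.
Proof.
rewrite mxE colform_expand; case: ifP => hk.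
  by apply: eq_bigr => i _; apply: eq_bigr => i' _; rewrite col_vmxE hk ffunE.
by apply: big1 => i _; apply: big1 => i' _; rewrite col_vmxE hk B00r mxE.
Qed.

Lemma ralg_col_vmx r c : inRalg B0 r -> r (col_vmx i0 c) = col_vmx i0 (vcol0 (r (col_vmx i0 c))).
Proof.
move=> hr; rewrite -[in LHS](vcol_col_vmx i0 c) -Dract_delta00 ralg_Dract //.
exact: Dract_delta00.
Qed.

Lemma colform_bilin : bilin_form colform.
Proof.
split=> a x y z; rewrite !colform_expand mulr_sumr -big_split; apply: eq_bigr => i _;
  rewrite mulr_sumr -big_split; apply: eq_bigr => i' _ /=; rewrite !ffunE.
  by rewrite B0_bilin.1 !mxE.
by rewrite B0_bilin.2 !mxE.
Qed.

Lemma colform_sym x y : colform y x = d * colform x y.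
Proof. by rewrite /colform BformV_sym !mxE. Qed.

Lemma colform_nondeg : nondegen_form colform.
Proof.
have nd_r y : (forall x, colform x y = 0) -> y = 0.
  move=> H; rewrite -(vcol_col_vmx i0 y) (_ : col_vmx i0 y = 0).
    by apply/ffunP => i; rewrite !ffunE mxE.
  apply: BformV_nondeg => x; apply/matrixP => j k.
  by rewrite BformV_col_vmx_r mxE H if_same.
split=> // x H; apply: nd_r => y.
by rewrite colform_sym H mulr0.
Qed.

Definition col_action (r : V -> V) : U -> U := fun c => vcol0 (r (col_vmx i0 c)).

Lemma col_action_finitary r : inRalg B0 r -> finitary_op colform (col_action r).
Proof.
case=> s hs; exists [seq (vcol p.1 j, vcol p.2 j) | p <- s, j <- index_enum 'I_l] => c.
rewrite big_allpairs_dep /= /col_action hs vcol_sum; apply: eq_bigr => p _.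
by rewrite /rk1 vcol_Dract; apply: eq_bigr => j _; rewrite BformV_col_vmx_r eqxx.
Qed.

Lemma col_action_surj f : finitary_op colform f ->
  exists r, inRalg B0 r /\ forall x, col_action r x = f x.
Proof.
case=> s hs; exists (fun x => \sum_(p <- s) rk1 B0 (col_vmx i0 p.1) (col_vmx i0 p.2) x).
split; first by exists [seq (col_vmx i0 p.1, col_vmx i0 p.2) | p <- s] => x; rewrite big_map.
move=> c; rewrite hs /col_action vcol_sum; apply: eq_bigr => p _.
by rewrite /rk1 vcol_Dract_col_vmx.
Qed.

Lemma col_action_inj r r' : inRalg B0 r -> inRalg B0 r' ->
  (forall x, col_action r x = col_action r' x) -> forall x, r x = r' x.
Proof.
move=> hr hr' H x; rewrite (vmx_col_decomp i0 x) !ralg_sum //; apply: eq_bigr => j _.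
rewrite !ralg_Dract // (ralg_col_vmx _ hr) (ralg_col_vmx _ hr').
by move: (H (vcol x j)); rewrite /col_action => ->.
Qed.

Lemma sgn_is_of_sym : sgn_is B0 phi d.
Proof.
exists U, colform, col_action; split; [|split].
- by split; [exact: colform_bilin | exact: colform_nondeg | exact: colform_sym].
- by split; [exact: col_action_finitary | exact: col_action_surj | exact: col_action_inj].
split.
- by move=> r r' _ _ x; apply/ffunP => i; rewrite /col_action !ffunE mxE.
- by move=> a r _ x; apply/ffunP => i; rewrite /col_action !ffunE mxE.
- by move=> r r' _ hr' x; rewrite /col_action (ralg_col_vmx x hr') vcol_col_vmx.
- move=> r hr x y; have [hr1 hA] := phi_adjoint hr.
  by rewrite /colform /col_action -(ralg_col_vmx _ hr) -(ralg_col_vmx _ hr1) hA.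
Qed.

End Nondegenerate.
End MatrixForm.

Lemma sign_mulrr (F : pzRingType) (d : F) : d = 1 \/ d = -1 -> d * d = 1.
Proof. by case=> ->; rewrite ?mulr1 ?mulrNN ?mulr1. Qed.

Section GradedForm.
Variables (F : fieldType) (G : zmodType) (l : nat) (Ts : seq G).
Variables (X : G -> 'M[F]_l) (beta : G -> F) (g0 : G) (gamma : G -> G).
Hypothesis grading : division_grading Ts X beta.
Hypothesis gamma_ok : gamma_choice Ts g0 gamma.

Local Notation C := (Bcoef Ts X g0 gamma).
Local Notation tau := (tauG g0 gamma).
Local Notation self_paired g := (g0 + g + g \in Ts).

Lemma supp_double t : t \in Ts -> t + t = 0.
Proof. by case: grading => -[_ _ _ H] _; apply: H. Qed.

Lemma supp_oppE t : t \in Ts -> - t = t.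
Proof. by move=> /supp_double/eqP h; apply/eqP; rewrite eq_sym -addr_eq0. Qed.

Lemma supp_opp t : (- t \in Ts) = (t \in Ts).
Proof. by apply/idP/idP => h; [rewrite -(opprK t) supp_oppE | rewrite supp_oppE]. Qed.

Lemma beta_sqr t : t \in Ts -> beta t * beta t = 1.
Proof. by case: grading => _ [_ _ _ _ H] /H [_ /sign_mulrr]. Qed.

Lemma dim_pos : (0 < l)%N.
Proof.
case: grading => -[_ supp0 _ _] [_ _ Xfree _ _]; case: l X Xfree => [|n] X' Xfree //.
have := Xfree (fun _ => 1) _ 0 supp0.
rewrite (_ : \sum_(t <- Ts) _ = 0); last by apply/matrixP => -[].
by move=> /(_ erefl) /eqP; rewrite oner_eq0.
Qed.

Lemma double_coset g h : g - h \in Ts -> g + g = h + h.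
Proof.
by move=> /supp_double H; apply/eqP; rewrite -subr_eq0 opprD addrACA H.
Qed.

Lemma tauGE g : tau g = g0 + g + g.
Proof.
case: gamma_ok => gamma_in _ _.
by rewrite /tauG -!addrA (double_coset (gamma_in g)).
Qed.

Lemma tauG_supp g : self_paired g -> tau g \in Ts.
Proof. by rewrite tauGE. Qed.

Lemma Bcoef_coset g h : g - h \in Ts -> C g = C h.
Proof. by move=> H; rewrite /Bcoef !tauGE -!addrA (double_coset H). Qed.

Lemma self_paired_dual g : g0 + (- g0 - g) + (- g0 - g) = - (g0 + g + g).
Proof. by rewrite (addrA g0 (- g0)) subrr add0r !opprD [LHS]addrC. Qed.

Lemma Bcoef_dual g : C (- g0 - g) = C g.
Proof.
rewrite /Bcoef self_paired_dual supp_opp; case: ifP => // h.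
by rewrite !tauGE self_paired_dual supp_oppE.
Qed.

Lemma Bcoef_unit g : C g \in unitmx.
Proof.
rewrite /Bcoef; case: ifP => h; last exact: unitmx1.
by case: grading => _ [-> //]; rewrite tauGE.
Qed.

Lemma trmx_Bcoef g : (C g)^T = (if self_paired g then beta (tau g) else 1) *: C g.
Proof.
rewrite /Bcoef; case: ifP => h; last by rewrite trmx1 scale1r.
by case: grading => _ [_ _ _ _ /(_ (tau g))]; rewrite tauGE => /(_ h) [].
Qed.

Definition delta_of (k : G -> F) g := if self_paired g then k g * beta (tau g) else k g.

Definition sym_mu (d : F) g := if self_paired g then d * beta (tau g) else d.

Lemma delta_of_sym_mu d g : delta_of (sym_mu d) g = d.
Proof.
by rewrite /delta_of /sym_mu; case: ifP => h; rewrite ?h // -mulrA beta_sqr ?mulr1 ?tauGE.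
Qed.

Variables (Vt : lmodType F) (Vg : G -> {pred Vt}) (Bt : Vt -> Vt -> F).
Variable B0 : Vt -> Vt -> 'M[F]_l.
Hypothesis Vg_grading : quotient_grading Ts Vg.
Hypothesis Bt_bilin : bilin_form Bt.
Hypothesis Bt_nondeg : nondegen_form Bt.
Hypothesis Bt_compat : form_compatible Ts g0 Vg Bt.
Hypothesis B0_addl : forall u1 u2 v, B0 (u1 + u2) v = B0 u1 v + B0 u2 v.
Hypothesis B0_homog : forall g u v, u \in Vg g -> B0 u v = Bt u v *: C g.

Local Notation V := 'M[Vt]_l.
Local Notation B := (BformV B0).

Lemma homog_ind (P : Vt -> Prop) : P 0 -> (forall x y, P x -> P y -> P (x + y)) ->
  (forall g u, u \in Vg g -> P u) -> forall u, P u.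
Proof.
move=> P0 PD PH u; case: Vg_grading => _ _ H _; have [s [hs ->]] := H u.
elim: s hs => [|p s IH] /=; first by rewrite big_nil.
by move=> /andP [hp hs]; rewrite big_cons; apply: PD; [apply: PH hp | apply: IH].
Qed.

Lemma Bt0l v : Bt 0 v = 0.
Proof. by have := Bt_bilin.1 (-1) 0 0 v; rewrite scaler0 addr0 mulN1r addNr. Qed.

Lemma Bt0r u : Bt u 0 = 0.
Proof. by have := Bt_bilin.2 (-1) u 0 0; rewrite scaler0 addr0 mulN1r addNr. Qed.

Lemma B00l_homog v : B0 0 v = 0.
Proof. by apply: (addrI (B0 0 v)); rewrite -B0_addl !addr0. Qed.

Lemma B0_bilinear : bilinear_mx_form B0.
Proof.
split.
- move=> a u1 u2 v; rewrite B0_addl; congr (_ + _); elim/homog_ind: u1.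
  + by rewrite scaler0 B00l_homog scaler0.
  + by move=> x y IHx IHy; rewrite scalerDr !B0_addl IHx IHy scalerDr.
  move=> g u hu; have hau : a *: u \in Vg g.
    by case: Vg_grading => /(_ g) [Vg0 Hsub] _ _ _; rewrite -[a *: u]addr0; apply: Hsub.
  rewrite (B0_homog _ hu) (B0_homog _ hau) scalerA.
  by have := Bt_bilin.1 a u 0 v; rewrite addr0 Bt0l addr0 => ->.
- move=> a u v1 v2; elim/homog_ind: u.
  + by rewrite !B00l_homog scaler0 addr0.
  + by move=> x y IHx IHy; rewrite !B0_addl IHx IHy scalerDr addrACA.
  by move=> g u hu; rewrite !(B0_homog _ hu) Bt_bilin.2 scalerDl scalerA.
Qed.

(* Off the pairing [g0 A A' = T] both sides vanish; on it [Bcoef] takes the same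
   value on [A] and [A'], and transposing it produces the factor [beta (tau g)]. *)
Lemma B0_trmx (k : G -> F) :
  (forall g u v, u \in Vg g -> v \in Vg (- g0 - g) -> Bt v u = k g * Bt u v) ->
  forall g a b, a \in Vg g -> B0 b a = delta_of k g *: (B0 a b)^T.
Proof.
move=> Hk g a b ha; elim/homog_ind: b.
- by rewrite B00l_homog (B00r B0_bilinear) trmx0 scaler0.
- move=> x y IHx IHy.
  by rewrite B0_addl (B0_addr B0_bilinear) IHx IHy linearD /= scalerDr.
move=> h b hb; rewrite (B0_homog _ hb) (B0_homog _ ha).
have [Hin|Hout] := boolP (g0 + g + h \in Ts); last first.
  rewrite (Bt_compat ha hb Hout) (Bt_compat hb ha) ?scale0r ?trmx0 ?scaler0 //.
  by rewrite addrAC.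
have Hc : h - (- g0 - g) \in Ts by rewrite opprD !opprK addrC.
have hb' : b \in Vg (- g0 - g).
  by case: Vg_grading => _ Hcos _ _; rewrite -(Hcos _ _ Hc).
rewrite (Bcoef_coset Hc) Bcoef_dual (Hk _ _ _ ha hb') linearZ /= trmx_Bcoef /delta_of.
case: ifP => hc; rewrite !scalerA; last by rewrite mulr1 mulrC.
congr (_ *: _); rewrite -!mulrA [beta _ * (_ * _)]mulrCA beta_sqr ?tauGE //.
by rewrite mulr1 mulrC.
Qed.

Lemma BformV_sym d : sym_condition Ts beta g0 gamma Vg Bt d ->
  forall x y : V, B y x = d *: (B x y)^T.
Proof.
move=> Hsym x y; apply: BformV_trmx => i j i' k; move: (x i j).
elim/homog_ind => [|u1 u2 IH1 IH2|g a ha].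
- by rewrite (B00r B0_bilinear) B00l_homog trmx0 scaler0.
- by rewrite (B0_addr B0_bilinear) B0_addl IH1 IH2 linearD /= scalerDr.
by rewrite (@B0_trmx (sym_mu d) Hsym g a _ ha) delta_of_sym_mu.
Qed.

Lemma BformV_nondeg (z : V) : (forall x, B x z = 0) -> z = 0.
Proof.
move=> Hz; apply/matrixP => i' k; rewrite mxE.
apply: Bt_nondeg.2 => a; move: i'; elim/homog_ind: a.
- by move=> i'; exact: Bt0l.
- move=> x y IHx IHy i'.
  by have := Bt_bilin.1 1 x y (z i' k); rewrite scale1r mul1r IHx IHy addr0.
move=> g a ha; pose w : 'cV[F]_l := \col_i Bt a (z i k).
suff w0 : w = 0 by move=> i'; have := congr1 (fun m : 'cV[F]_l => m i' ord0) w0; rewrite !mxE.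
have Cw0 : C g *m w = 0.
  apply/matrixP => i q; rewrite !mxE (ord1 q).
  pose x : V := \matrix_(p, q) (if p == i then a else 0).
  move: (congr1 (fun m : 'M[F]_l => m k k) (Hz x)).
  rewrite !mxE (bigD1 i) //= [X in _ + X]big1 ?addr0.
    rewrite mxE eqxx => hsum; apply: (etrans _ hsum); apply: eq_bigr => j _.
    by rewrite (B0_homog _ ha) !mxE mulrC.
  by move=> p /negbTE hp; apply: big1 => i'' _; rewrite mxE hp B00l_homog mxE.
by rewrite -(mulKmx (Bcoef_unit g) w) Cw0 mulmx0.
Qed.

Variable mu : G -> F.
Hypothesis mu_neq0 : forall g, mu g != 0.
Hypothesis Bt_mu : forall g u v, u \in Vg g -> v \in Vg (- g0 - g) -> Bt v u = mu g * Bt u v.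

Lemma delta_of_neq0 g : delta_of mu g != 0.
Proof.
rewrite /delta_of; case: ifP => h //; rewrite mulf_neq0 //.
apply/eqP => b0; have := beta_sqr (tauG_supp h).
by rewrite b0 mul0r => /eqP; rewrite eq_sym oner_eq0.
Qed.

Lemma BformV_scalar_vmx g a x : a \in Vg g ->
  B x (scalar_vmx l a) = delta_of mu g *: (B (scalar_vmx l a) x)^T.
Proof.
move=> ha; apply: BformV_trmx => i j i' k; apply: (B0_trmx Bt_mu).
by rewrite scalar_vmxE; case: ifP => _ //; case: Vg_grading => /(_ g) [].
Qed.

Variable phi : (V -> V) -> (V -> V).
Hypothesis phi_adjoint : forall r, inRalg B0 r ->
  inRalg B0 (phi r) /\ forall x y, B (r x) y = B x (phi r y).

Lemma phi_rk1 g a v : a \in Vg g -> forall y,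
  phi (rk1 B0 v (scalar_vmx l a)) y = Dract (scalar_vmx l a) ((delta_of mu g)^-1 *: B v y).
Proof.
move=> ha y; have [_ hA] := phi_adjoint (inRalg_rk1 B0 v (scalar_vmx l a)).
symmetry; apply: (BformV_inj_r B0_bilinear BformV_nondeg) => x.
rewrite -hA /rk1 (BformV_Dract_l B0_bilinear) (BformV_Dract_r B0_bilinear).
rewrite (BformV_scalar_vmx _ ha) -scalemxAl -scalemxAr scalerA.
by rewrite mulfV ?delta_of_neq0 // scale1r.
Qed.

Lemma delta_of_mul_eq1 : (forall r, inRalg B0 r -> forall x, phi (phi r) x = r x) ->
  forall g h a b, a \in Vg g -> b \in Vg h -> a != 0 -> b != 0 ->
  delta_of mu g * delta_of mu h = 1.
Proof.
move=> phi_invol g h a b ha hb a0 b0.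
set u := scalar_vmx l a; set v := scalar_vmx l b; set r := rk1 B0 v u.
have [hr1 _] := phi_adjoint (inRalg_rk1 B0 v u); have [_ hA2] := phi_adjoint hr1.
set c := (delta_of mu g)^-1 * (delta_of mu h)^-1.
have phi2_r y : phi (phi r) y = Dract v (c *: B u y).
  apply: (BformV_inj_r B0_bilinear BformV_nondeg) => x.
  rewrite -hA2 (phi_rk1 _ ha) (BformV_Dract_l B0_bilinear) (BformV_Dract_r B0_bilinear).
  rewrite (BformV_scalar_vmx _ hb) -scalemxAl -scalemxAr linearZ /= -scalemxAl scalerA.
  by rewrite /c mulrCA mulfV ?delta_of_neq0 // mulr1.
suff c1 : c = 1 by move: c1; rewrite /c -invfM => /eqP; rewrite invr_eq1 => /eqP.
apply/eqP/negPn/negP => c_neq1.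
have Bu0 y : B u y = 0.
  apply/matrixP => i k; rewrite mxE.
  have := congr1 (fun m : V => m i k) (phi2_r y).
  rewrite phi_invol; last exact: inRalg_rk1.
  rewrite /r /rk1 !Dract_scalar_vmx !mxE => /eqP; rewrite -subr_eq0 -scalerBl scaler_eq0 (negbTE b0) orbF.
  by rewrite -[X in X - _]mul1r -mulrBl mulf_eq0 subr_eq0 eq_sym (negbTE c_neq1) => /eqP.
have u0 : u = 0.
  by apply: BformV_nondeg => x; rewrite (BformV_scalar_vmx _ ha) Bu0 trmx0 scaler0.
by move: a0; rewrite (scalar_vmx_eq0 (Ordinal dim_pos) u0) eqxx.
Qed.

Lemma sym_condition_of_involution :
  (forall r, inRalg B0 r -> forall x, phi (phi r) x = r x) ->
  exists d : F, (d = 1 \/ d = -1) /\ sym_condition Ts beta g0 gamma Vg Bt d.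
Proof.
move=> phi_invol.
have [[g [a [ha a0]]] | no_homog] := classic (exists g a, a \in Vg g /\ a != 0); last first.
  exists 1; split; first by left.
  move=> g u v hu hv; have [->|u0] := eqVneq u 0; first by rewrite Bt0r Bt0l mulr0.
  by case: no_homog; exists g, u.
have dg2 := delta_of_mul_eq1 phi_invol ha ha a0 a0.
exists (delta_of mu g); split.
  have : delta_of mu g ^+ 2 == 1 by rewrite expr2 dg2.
  by rewrite sqrf_eq1 => /orP [] /eqP; [left | right].
move=> g' u v hu hv; have [->|u0] := eqVneq u 0; first by rewrite Bt0r Bt0l mulr0.
have dg' : delta_of mu g' = delta_of mu g.
  by rewrite -[LHS]mulr1 -dg2 mulrA (delta_of_mul_eq1 phi_invol hu ha u0 a0) mul1r.
rewrite (Bt_mu hu hv) -dg' /delta_of; case: ifP => h; rewrite ?h //.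
by rewrite -(mulrA (mu g')) beta_sqr ?mulr1 ?tauG_supp.
Qed.

End GradedForm.

Theorem proposition3p21 (F : closedFieldType) (G : zmodType) (l : nat)
    (Ts : seq G) (X : G -> 'M[F]_l) (beta : G -> F)
    (Vt : lmodType F) (Vg : G -> {pred Vt}) (Bt : Vt -> Vt -> F) (g0 : G)
    (mu : G -> F) (gamma : G -> G) (B0 : Vt -> Vt -> 'M[F]_l)
    (phi : ('M[Vt]_l -> 'M[Vt]_l) -> ('M[Vt]_l -> 'M[Vt]_l)) :
  (2%:R : F) != 0 ->
  division_grading Ts X beta ->
  quotient_grading Ts Vg ->
  bilin_form Bt -> nondegen_form Bt ->
  form_compatible Ts g0 Vg Bt ->
  (forall g, mu g != 0) ->
  (forall g u v, u \in Vg g -> v \in Vg (- g0 - g) -> Bt v u = mu g * Bt u v) ->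
  gamma_choice Ts g0 gamma ->
  (forall u1 u2 v, B0 (u1 + u2) v = B0 u1 v + B0 u2 v) ->
  (forall g u v, u \in Vg g -> B0 u v = Bt u v *: Bcoef Ts X g0 gamma g) ->
  (forall r, inRalg B0 r ->
     inRalg B0 (phi r) /\ forall x y, BformV B0 (r x) y = BformV B0 x (phi r y)) ->
  ((forall r, inRalg B0 r -> forall x, phi (phi r) x = r x) <->
     exists delta : F, (delta = 1 \/ delta = -1) /\
       sym_condition Ts beta g0 gamma Vg Bt delta)
  /\ (forall delta : F, (delta = 1 \/ delta = -1) ->
        sym_condition Ts beta g0 gamma Vg Bt delta -> sgn_is B0 phi delta).
Proof.
move=> _ grading Vg_grading Bt_bil Bt_nd compat mu_neq0 Bt_mu gamma_ok B0_addl B0_homog adj.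
have B0_bil := B0_bilinear Vg_grading Bt_bil B0_addl B0_homog.
have nondeg := BformV_nondeg grading gamma_ok Vg_grading Bt_bil Bt_nd B0_addl B0_homog.
have B_sym := BformV_sym grading gamma_ok Vg_grading Bt_bil compat B0_addl B0_homog.
split; first split.
- exact: (sym_condition_of_involution grading gamma_ok Vg_grading Bt_bil Bt_nd compat
    B0_addl B0_homog mu_neq0 Bt_mu adj).
- case=> d [d_sign sym].
  exact: (adjoint_involutive B0_bil nondeg adj (B_sym d sym) (sign_mulrr d_sign)).
- move=> d _ sym.
  exact: (sgn_is_of_sym B0_bil nondeg adj (B_sym d sym) (Ordinal (dim_pos grading))).
Qed.
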